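(* Let $f:\mathbb{N}\to\mathbb{N}$ be an arbitrary non-decreasing function and let $d$ be a positive integer. There exist integers $k_0$ and $n_0$ such that if $T$ is a rooted tree of depth at most $d$ with at least $n_0$ leaves, then for some $k\le k_0$ there exists a vertex $v$ of $T$ that has at least $f(k)$ children, such that the subtree of $T$ rooted at each child of $v$ has at most $k$ leaves. *)

From mathcomp Require Import all_boot.
Set Implicit Arguments. Unset Strict Implicit. Unset Printing Implicit Defensive.

Inductive tree : Type := Node of seq tree.

Definition children (t : tree) : seq tree := let: Node ts := t in ts.

Fixpoint leaves (t : tree) : nat :=
  let: Node ts := t in
  if ts is [::] then 1 else sumn (map leaves ts).

Fixpoint depth (t : tree) : nat :=
  let: Node ts := t in
  if ts is [::] then 0 else (\max_(s <- map depth ts) s).+1.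

(* All vertices of t, each represented by the subtree of t rooted at it. *)
Fixpoint vertices (t : tree) : seq tree :=
  let: Node ts := t in t :: flatten (map vertices ts).

(* Let B 0 = 1 and B (j+1) = (f (B j) + 1) * B j.  By induction on j, a tree of
   depth at most j either has at most B j leaves or contains a vertex with at
   least f k children, each spanning at most k <= B j leaves: if no subtree of
   a child contains such a vertex, every child has at most B j leaves, so either
   the root itself works with k = B j, or it has fewer than f (B j) children and
   hence at most f (B j) * B j leaves.  The extra factor in B keeps it
   nondecreasing even where f vanishes.  Take k0 = B d and n0 = B d + 1. *)
From mathcomp Require Import all_boot.
From Stdlib Require List.

Set Implicit Arguments. Unset Strict Implicit. Unset Printing Implicit Defensive.

Fixpoint leaf_bound (f : nat -> nat) (j : nat) : nat :=
  if j is j'.+1 then (f (leaf_bound f j')).+1 * leaf_bound f j' else 1.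

Lemma leaf_bound_gt0 f j : 0 < leaf_bound f j.
Proof. by elim: j => //= j IH; rewrite muln_gt0 IH. Qed.

Lemma leaf_bound_leS f j : leaf_bound f j <= leaf_bound f j.+1.
Proof. by rewrite /= mulSn leq_addr. Qed.

Lemma In_exists_or_forall (T : Type) (P Q : T -> Prop) (s : seq T) :
  (forall x, List.In x s -> P x \/ Q x) ->
  (exists2 x, List.In x s & P x) \/ (forall x, List.In x s -> Q x).
Proof.
elim: s => [|x s IH] PQs; first by right.
have [Px | Qx] := PQs x (or_introl erefl).
  by left; exists x => //; left.
have [[y ys Py] | Qs] := IH (fun y ys => PQs y (or_intror ys)).
  by left; exists y => //; right.
by right=> y [<- | ys]; [exact: Qx | exact: Qs].
Qed.

Lemma sumn_map_le (T : Type) (g : T -> nat) (s : seq T) (B : nat) :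
  (forall x, List.In x s -> g x <= B) -> sumn (map g s) <= size s * B.
Proof.
elim: s => //= x s IH gsB; rewrite mulSn leq_add //; first by apply: gsB; left.
by apply: IH => y ys; apply: gsB; right.
Qed.

Lemma vertices_child (ts : seq tree) (c v : tree) :
  List.In c ts -> List.In v (vertices c) -> List.In v (vertices (Node ts)).
Proof.
move=> cts vc; right; elim: ts cts => //= t ts IH [-> | cts].
  by apply: List.in_or_app; left.
by apply: List.in_or_app; right; apply: IH.
Qed.

Lemma In_le_bigmax_map (T : Type) (g : T -> nat) (s : seq T) (x : T) :
  List.In x s -> g x <= \max_(y <- map g s) y.
Proof.
elim: s => //= y s IH; rewrite big_cons => -[-> | xs].
  exact: leq_maxl.
exact: leq_trans (IH xs) (leq_maxr _ _).
Qed.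

Lemma depth_child (ts : seq tree) (c : tree) :
  List.In c ts -> depth c < depth (Node ts).
Proof. by case: ts => // t ts cts; rewrite ltnS In_le_bigmax_map. Qed.

Definition has_cluster (f : nat -> nat) (K : nat) (T : tree) : Prop :=
  exists k : nat, [/\ 0 < k, k <= K &
    exists v : tree, [/\ List.In v (vertices T),
      f k <= size (children v) &
      forall c : tree, List.In c (children v) -> leaves c <= k]].

Lemma has_cluster_child f K ts c :
  List.In c ts -> has_cluster f K c -> has_cluster f K (Node ts).
Proof.
move=> cts [k [k_gt0 kK [v [vc fkv vleaves]]]].
by exists k; split => //; exists v; split => //; apply: vertices_child vc.
Qed.

Lemma has_cluster_le f K K' T :
  K <= K' -> has_cluster f K T -> has_cluster f K' T.
Proof.
by move=> KK' [k [k_gt0 kK vk]]; exists k; split => //; apply: leq_trans KK'.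
Qed.

Lemma leaves_le_or_cluster f j T : depth T <= j ->
  leaves T <= leaf_bound f j \/ has_cluster f (leaf_bound f j) T.
Proof.
elim: j T => [|j IH] [[|t ts]] dT; try by left; rewrite ?leaf_bound_gt0.
set ts' := t :: ts in dT *.
have child_cases c : List.In c ts' ->
    has_cluster f (leaf_bound f j) c \/ leaves c <= leaf_bound f j.
  move=> cts; have: depth c <= j by rewrite -ltnS (leq_trans (depth_child cts)).
  by case/IH; [right | left].
have [[c cts cc] | small] := In_exists_or_forall child_cases.
  by right; apply: has_cluster_le (leaf_bound_leS f j) _;
    apply: has_cluster_child cts cc.
have [many | few] := leqP (f (leaf_bound f j)) (size ts').
  right; exists (leaf_bound f j); split; rewrite ?leaf_bound_gt0 ?leaf_bound_leS //.
  by exists (Node ts'); split => //; left.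
left; apply: leq_trans (sumn_map_le small) _.
by rewrite leq_mul2r leqW ?orbT // ltnW.
Qed.

Theorem lemma3p8 (f : nat -> nat) (f_mono : {homo f : m n / m <= n})
    (d : nat) (d_pos : 0 < d) :
  exists k0 n0 : nat, forall T : tree,
    depth T <= d -> n0 <= leaves T ->
    exists k : nat, [/\ 0 < k, k <= k0 &
      exists v : tree, [/\ List.In v (vertices T),
        f k <= size (children v) &
        forall c : tree, List.In c (children v) -> leaves c <= k]].
Proof.
exists (leaf_bound f d), (leaf_bound f d).+1 => T dT manyT.
have [fewT | //] := leaves_le_or_cluster f dT.
by move: manyT; rewrite ltnNge fewT.
Qed.
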